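(* Let $G$ be a discrete group acting effectively on a mixing Smale space $(X,\varphi)$. Then there exists a nonempty finite set $P$ of periodic points of $\varphi$ with $\varphi(P)=P$ such that $gp\in P$ for every $g\in G$ and every $p\in P$.
   Context: A Smale space $(X,\varphi)$ is an infinite compact metric space with a homeomorphism $\varphi$ admitting a local product structure (a bracket map $[\cdot,\cdot]$ defined for nearby points with $[x,x]=x$, $[x,[y,z]]=[x,z]$, $[[x,y],z]=[x,z]$, $\varphi[x,y]=[\varphi x,\varphi y]$, with $\varphi$ uniformly contracting on stable local sets $\{[x,y]=y\}$ and $\varphi^{-1}$ uniformly contracting on unstable local sets $\{[x,y]=x\}$). Mixing: for all nonempty open $U,V$ there is $N$ with $\varphi^n(U)\cap V\neq\emptyset$ for all $n\geq N$. A point $x$ is periodic if $\varphi^k(x)=x$ for some $k\ge1$. An action of $G$ on $(X,\varphi)$ is a homomorphism $G\to\mathrm{Homeo}(X)$ with $g\varphi(x)=\varphi(gx)$; effective means every $g\neq e$ moves some point. *)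

From Stdlib Require Import Reals List.
Open Scope R_scope.

Section Defs.
Context {X : Type} (d : X -> X -> R).

Definition is_metric : Prop :=
  (forall x y, 0 <= d x y) /\
  (forall x y, d x y = 0 <-> x = y) /\
  (forall x y, d x y = d y x) /\
  (forall x y z, d x z <= d x y + d y z).

Definition is_open (U : X -> Prop) : Prop :=
  forall x, U x -> exists r, 0 < r /\ forall y, d x y < r -> U y.

Definition is_compact : Prop :=
  forall (I : Type) (U : I -> X -> Prop),
    (forall i, is_open (U i)) -> (forall x, exists i, U i x) ->
    exists l : list I, forall x, exists i, In i l /\ U i x.

Definition continuous_map (f : X -> X) : Prop :=
  forall x e, 0 < e -> exists del, 0 < del /\
    forall y, d x y < del -> d (f x) (f y) < e.

Definition is_homeomorphism (f : X -> X) : Prop :=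
  continuous_map f /\
  exists g : X -> X, (forall x, g (f x) = x) /\ (forall x, f (g x) = x) /\
    continuous_map g.

(* Smale space (Ruelle / Putnam): bracket defined on {(x,y) | d x y <= eps},
   represented by a total function only constrained on that domain. *)
Definition bracket_axioms (phi phii : X -> X) (eps lam : R) (br : X -> X -> X) : Prop :=
  (forall x y e, d x y <= eps -> 0 < e -> exists del, 0 < del /\
     forall x' y', d x' y' <= eps -> d x x' < del -> d y y' < del ->
       d (br x y) (br x' y') < e) /\
  (forall x, br x x = x) /\
  (forall x y z, d y z <= eps -> d x (br y z) <= eps -> d x z <= eps ->
     br x (br y z) = br x z) /\
  (forall x y z, d x y <= eps -> d (br x y) z <= eps -> d x z <= eps ->
     br (br x y) z = br x z) /\
  (forall x y, d x y <= eps -> d (phi x) (phi y) <= eps ->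
     phi (br x y) = br (phi x) (phi y)) /\
  (* phi contracts local stable sets *)
  (forall x y, d x y <= eps -> br x y = y -> d (phi x) (phi y) <= lam * d x y) /\
  (* phi^{-1} contracts local unstable sets *)
  (forall x y, d x y <= eps -> br x y = x -> d (phii x) (phii y) <= lam * d x y).

Definition infinite_type : Prop := ~ exists l : list X, forall x, In x l.

Definition is_smale_space (phi : X -> X) : Prop :=
  is_metric /\ is_compact /\ infinite_type /\ continuous_map phi /\
  exists phii : X -> X,
    (forall x, phii (phi x) = x) /\ (forall x, phi (phii x) = x) /\
    continuous_map phii /\
    exists (eps lam : R) (br : X -> X -> X),
      0 < eps /\ 0 < lam < 1 /\ bracket_axioms phi phii eps lam br.

Definition is_mixing (phi : X -> X) : Prop :=
  forall U V : X -> Prop, is_open U -> is_open V ->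
    (exists x, U x) -> (exists y, V y) ->
    exists N : nat, forall n : nat, (N <= n)%nat ->
      exists x, U x /\ V (Nat.iter n phi x).

Definition is_periodic (phi : X -> X) (x : X) : Prop :=
  exists k : nat, (1 <= k)%nat /\ Nat.iter k phi x = x.

End Defs.

Definition is_group {G : Type} (mul : G -> G -> G) (e : G) (inv : G -> G) : Prop :=
  (forall a b c, mul a (mul b c) = mul (mul a b) c) /\
  (forall a, mul e a = a) /\ (forall a, mul a e = a) /\
  (forall a, mul (inv a) a = e) /\ (forall a, mul a (inv a) = e).

Definition is_action {G X : Type} (d : X -> X -> R) (phi : X -> X)
  (mul : G -> G -> G) (e : G) (act : G -> X -> X) : Prop :=
  (forall g, is_homeomorphism d (act g)) /\
  (forall x, act e x = x) /\
  (forall g h x, act (mul g h) x = act g (act h x)) /\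
  (forall g x, act g (phi x) = phi (act g x)).

Definition is_effective {G X : Type} (e : G) (act : G -> X -> X) : Prop :=
  forall g, g <> e -> exists x, act g x <> x.

From Stdlib Require Import Reals List Lra Lia Arith Classical ClassicalEpsilon.
Open Scope R_scope.

(* A mixing Smale space has points [x] with [phi^N x] arbitrarily close to [x] for all
   large [N].  Iterating [z |-> [x, phi^N z]] inside the local stable set of [x] and
   taking a cluster point gives a point whose backward orbit follows the periodic
   pseudo-orbit [x, phi x, ..., phi^(N-1) x, x, ...]; the same construction for
   [phi^-1] gives one whose forward orbit does, and their bracket follows it in both
   directions, so expansiveness forces it to be fixed by [phi^N] (Bowen's closing
   lemma).  Expansiveness and compactness also make [Fix(phi^N)] finite.  This finite
   set is invariant under [phi], and under every group element because the action
   commutes with [phi]. *)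

Lemma pow_le_1 x n : 0 <= x <= 1 -> 0 <= x ^ n <= 1.
Proof. intros Hx; induction n; simpl; nra. Qed.

Lemma pow_eventually_lt lam r : 0 < lam < 1 -> 0 < r ->
  exists M, forall N, (M <= N)%nat -> lam ^ N < r.
Proof.
  intros Hlam Hr.
  destruct (pow_lt_1_zero lam ltac:(rewrite Rabs_right; lra) r Hr) as [M HM].
  exists M; intros N HN.
  specialize (HM N HN); rewrite Rabs_right in HM; [lra | apply Rle_ge, pow_le; lra].
Qed.

Lemma exists_pos_below a b : 0 < a -> 0 < b -> exists e, 0 < e /\ e <= a /\ e <= b.
Proof.
  intros Ha Hb; exists (Rmin a b).
  split; [apply Rmin_glb_lt | split; [apply Rmin_l | apply Rmin_r]]; auto.
Qed.

Lemma geometric_bound_eq0 lam v C : 0 < lam < 1 -> 0 <= v ->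
  (forall k, v <= lam ^ k * C) -> v = 0.
Proof.
  intros Hlam Hv Hbound.
  destruct (Req_dec v 0) as [|Hne]; auto; exfalso.
  assert (HC : 0 <= C) by (specialize (Hbound 0%nat); simpl in Hbound; lra).
  destruct (pow_eventually_lt lam (v / (C + 1)) Hlam) as [M HM].
  { apply Rdiv_lt_0_compat; lra. }
  specialize (HM M (Nat.le_refl M)); specialize (Hbound M).
  assert (Hpow : 0 <= lam ^ M) by (apply pow_le; lra).
  assert (lam ^ M * (C + 1) < v) by
    (apply (Rmult_lt_compat_r (C + 1)) in HM; [|lra]; field_simplify in HM; lra).
  nra.
Qed.

Lemma iter_sub_cancel {A} (f g : A -> A) : (forall x, f (g x) = x) ->
  forall i k z, (i <= k)%nat -> Nat.iter i f (Nat.iter k g z) = Nat.iter (k - i) g z.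
Proof.
  intros Hfg; induction i; intros k z Hik; simpl.
  - now rewrite Nat.sub_0_r.
  - rewrite IHi by lia. replace (k - i)%nat with (S (k - S i)) by lia. apply Hfg.
Qed.

Lemma iter_cancel {A} (f g : A -> A) : (forall x, f (g x) = x) ->
  forall k z, Nat.iter k f (Nat.iter k g z) = z.
Proof. intros Hfg k z. now rewrite (iter_sub_cancel f g Hfg k k), Nat.sub_diag. Qed.

Lemma iter_mod {A} (f : A -> A) N x : Nat.iter N f x = x ->
  forall j, Nat.iter j f x = Nat.iter (j mod N) f x.
Proof.
  intros Hx j.
  assert (Hmul : forall q, Nat.iter (N * q) f x = x).
  { induction q; [now rewrite Nat.mul_0_r|].
    now rewrite Nat.mul_succ_r, Nat.add_comm, Nat.iter_add, IHq. }
  transitivity (Nat.iter (j mod N + N * (j / N)) f x).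
  - f_equal; rewrite Nat.add_comm; apply Nat.div_mod_eq.
  - now rewrite Nat.iter_add, Hmul.
Qed.

Lemma positive_radius_upto n (P : nat -> R -> Prop) :
  (forall i r r', 0 < r' <= r -> P i r -> P i r') ->
  (forall i, (i <= n)%nat -> exists r, 0 < r /\ P i r) ->
  exists r, 0 < r /\ forall i, (i <= n)%nat -> P i r.
Proof.
  intros Hmono; induction n as [|n IHn]; intros Hex.
  - destruct (Hex 0%nat (Nat.le_refl 0)) as [r [Hr HP]].
    exists r; split; auto; intros i Hi.
    now replace i with 0%nat by lia.
  - destruct IHn as [r1 [Hr1 HP1]]; [intros i Hi; apply Hex; lia|].
    destruct (Hex (S n) (Nat.le_refl _)) as [r2 [Hr2 HP2]].
    destruct (exists_pos_below r1 r2 Hr1 Hr2) as (r & Hr & Hr_1 & Hr_2).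
    exists r; split; auto; intros i Hi.
    destruct (Nat.eq_dec i (S n)) as [->|Hne].
    + apply (Hmono _ r2); [lra | exact HP2].
    + apply (Hmono _ r1); [lra | apply HP1; lia].
Qed.

Lemma compact_locally_unique_finite {T} (d : T -> T -> R) (S : T -> Prop)
  (U : T -> T -> Prop) : is_compact d ->
  (forall x, is_open d (U x)) -> (forall x, U x x) ->
  (forall x p q, U x p -> U x q -> S p -> S q -> p = q) ->
  exists P : list T, forall q, In q P <-> S q.
Proof.
  intros Hc Hopen Hself Huniq.
  destruct (Hc T U Hopen (fun x => ex_intro _ x (Hself x))) as [l Hl].
  set (pick x := epsilon (inhabits x) (fun p => S p /\ U x p)).
  set (good x := if excluded_middle_informative (exists p, S p /\ U x p) then true else false).
  exists (map pick (filter good l)); intros q; split.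
  - rewrite in_map_iff; intros [x [<- Hx]].
    apply filter_In in Hx as [_ Hgood]; unfold good in Hgood.
    destruct excluded_middle_informative as [Hex|]; [|discriminate].
    apply (epsilon_spec (inhabits x) _ Hex).
  - intros Hq. destruct (Hl q) as [x [Hx HUq]].
    assert (Hex : exists p, S p /\ U x p) by (exists q; auto).
    destruct (epsilon_spec (inhabits x) _ Hex) as [HS HU]; fold (pick x) in HS, HU.
    rewrite <- (Huniq x (pick x) q HU HUq HS Hq).
    apply in_map, filter_In; split; auto.
    unfold good; destruct excluded_middle_informative; tauto.
Qed.

Section Metric.
Context {T : Type} (d : T -> T -> R) (Hm : is_metric d).

Lemma dist_ge0 x y : 0 <= d x y.
Proof. apply (proj1 Hm). Qed.
Lemma dist_refl x : d x x = 0.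
Proof. now apply (proj1 (proj2 Hm)). Qed.
Lemma dist_eq0 x y : d x y = 0 -> x = y.
Proof. apply (proj1 (proj2 Hm)). Qed.
Lemma dist_sym x y : d x y = d y x.
Proof. apply (proj1 (proj2 (proj2 Hm))). Qed.
Lemma dist_triangle x y z : d x z <= d x y + d y z.
Proof. apply (proj2 (proj2 (proj2 Hm))). Qed.

Lemma ball_open x r : is_open d (fun y => d x y < r).
Proof.
  intros y Hy; exists (r - d x y); split; [lra|].
  intros z Hz; pose proof (dist_triangle x y z); lra.
Qed.

Lemma continuous_iter f : continuous_map d f -> forall n, continuous_map d (Nat.iter n f).
Proof.
  intros Hf n; induction n as [|n IHn]; intros x e He.
  - exists e; split; auto.
  - destruct (Hf (Nat.iter n f x) e He) as [r1 [Hr1 H1]].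
    destruct (IHn x r1 Hr1) as [r2 [Hr2 H2]].
    exists r2; split; auto; intros y Hy; simpl; auto.
Qed.

Lemma bowen_ball_open f N x r : continuous_map d f ->
  is_open d (fun y => forall i, (i <= N)%nat -> d (Nat.iter i f x) (Nat.iter i f y) < r).
Proof.
  intros Hf y Hy.
  destruct (positive_radius_upto N (fun i s => forall z, d y z < s ->
              d (Nat.iter i f x) (Nat.iter i f z) < r)) as [s [Hs HP]].
  - intros i s s' Hs' HP z Hz; apply HP; lra.
  - intros i Hi.
    destruct (continuous_iter f Hf i y (r - d (Nat.iter i f x) (Nat.iter i f y)))
      as [s [Hs Hcont]]; [specialize (Hy i Hi); lra|].
    exists s; split; auto; intros z Hz; specialize (Hcont z Hz).
    pose proof (dist_triangle (Nat.iter i f x) (Nat.iter i f y) (Nat.iter i f z)); lra.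
  - exists s; split; auto.
Qed.

Lemma compact_cluster_point (Hc : is_compact d) (a : nat -> T) :
  exists u, forall r, 0 < r -> forall M, exists k, (M <= k)%nat /\ d u (a k) < r.
Proof.
  apply NNPP; intros Hnone.
  set (I := {u : T & {r : R & {M : nat | forall k, (M <= k)%nat -> r <= d u (a k)}}}).
  set (U (i : I) y := d (projT1 i) y < projT1 (projT2 i)).
  destruct (Hc I U) as [l Hl].
  - intros i; apply ball_open.
  - intros y.
    assert (Hy : exists r, 0 < r /\ exists M, forall k, (M <= k)%nat -> r <= d y (a k)).
    { apply NNPP; intros Hny; apply Hnone; exists y; intros r Hr M.
      apply NNPP; intros Hk; apply Hny; exists r; split; auto; exists M.
      intros k HMk; apply Rnot_lt_le; intros Hlt; apply Hk; exists k; auto. }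
    destruct Hy as [r [Hr [M HM]]].
    exists (existT _ y (existT _ r (exist _ M HM))); unfold U; simpl.
    now rewrite dist_refl.
  - set (Ms := list_max (map (fun i : I => proj1_sig (projT2 (projT2 i))) l)).
    destruct (Hl (a Ms)) as [[y [r [M HM]]] [Hin HU]]; unfold U in HU; simpl in HU.
    assert (HMs : (M <= Ms)%nat).
    { apply in_map with (f := fun i : I => proj1_sig (projT2 (projT2 i))) in Hin.
      exact (proj1 (Forall_forall _ _) (proj1 (list_max_le _ Ms) (Nat.le_refl _)) _ Hin). }
    pose proof (HM Ms HMs); lra.
Qed.

End Metric.

Set Implicit Arguments.
Record smale_data {T} (d : T -> T -> R) (f g : T -> T) (eps lam : R)
  (br : T -> T -> T) : Prop := {
  sd_metric : is_metric d;
  sd_compact : is_compact d;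
  sd_cont : continuous_map d f;
  sd_cont_inv : continuous_map d g;
  sd_inv_l : forall x, g (f x) = x;
  sd_inv_r : forall x, f (g x) = x;
  sd_eps : 0 < eps;
  sd_lam : 0 < lam < 1;
  sd_bracket : bracket_axioms d f g eps lam br }.
Unset Implicit Arguments.

Lemma smale_data_of_space {T} (d : T -> T -> R) (phi : T -> T) :
  is_smale_space d phi ->
  exists phii eps lam br, smale_data d phi phii eps lam br.
Proof.
  intros (Hm & Hc & _ & Hf & phii & Hl & Hr & Hg & eps & lam & br & He & Hlam & Hb).
  exists phii, eps, lam, br; split; auto.
Qed.

(* Reversing time exchanges stable and unstable sets, and [br b a] is the bracket
   adapted to the inverse map. *)
Lemma smale_data_inverse {T} d f g eps lam (br : T -> T -> T) :
  smale_data d f g eps lam br -> smale_data d g f eps lam (fun a b => br b a).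
Proof.
  intros [Hm Hc Hf Hg Hgf Hfg He Hl (B1 & B2 & B3 & B4 & B5 & B6 & B7)].
  pose proof (dist_sym d Hm) as Hsym.
  split; auto; repeat split.
  - intros x y e Hxy Hpos; rewrite Hsym in Hxy.
    destruct (B1 y x e Hxy Hpos) as [del [Hdel Hcont]].
    exists del; split; auto; intros x' y' H1 H2 H3; apply Hcont; auto; now rewrite Hsym.
  - auto.
  - intros x y z H1 H2 H3; apply B4; now rewrite Hsym.
  - intros x y z H1 H2 H3; apply B3; now rewrite Hsym.
  - intros x y H1 H2.
    rewrite <- (Hgf (br (g y) (g x))), B5; rewrite ?Hfg; auto; now rewrite Hsym.
  - intros x y H1 H2; rewrite (Hsym (g x)), (Hsym x); apply B7; auto; now rewrite Hsym.
  - intros x y H1 H2; rewrite (Hsym (f x)), (Hsym x); apply B6; auto; now rewrite Hsym.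
Qed.

Section SmaleData.
Context {T : Type} {d : T -> T -> R} {f g : T -> T} {eps lam : R} {br : T -> T -> T}
  (H : smale_data d f g eps lam br).

Lemma bracket_diag x : br x x = x.
Proof. now destruct (sd_bracket H) as (_ & Hdiag & _). Qed.

Lemma bracket_bracket_r x y z : d y z <= eps -> d x (br y z) <= eps -> d x z <= eps ->
  br x (br y z) = br x z.
Proof. destruct (sd_bracket H) as (_ & _ & Hr & _); apply Hr. Qed.

Lemma bracket_bracket_l x y z : d x y <= eps -> d (br x y) z <= eps -> d x z <= eps ->
  br (br x y) z = br x z.
Proof. destruct (sd_bracket H) as (_ & _ & _ & Hl & _); apply Hl. Qed.

Lemma stable_iter_contract k a b : d a b <= eps -> br a b = b ->
  d (Nat.iter k f a) (Nat.iter k f b) <= lam ^ k * d a b /\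
  br (Nat.iter k f a) (Nat.iter k f b) = Nat.iter k f b.
Proof.
  destruct (sd_bracket H) as (_ & _ & _ & _ & Hphi & Hcontr & _).
  pose proof (sd_lam H) as Hlam.
  intros Hab Hb; induction k as [|k [IH1 IH2]]; simpl; [split; [lra | auto]|].
  assert (Hpow : 0 <= lam ^ k <= 1) by (apply pow_le_1; lra).
  pose proof (dist_ge0 d (sd_metric H) a b).
  assert (Hk : d (Nat.iter k f a) (Nat.iter k f b) <= eps) by nra.
  pose proof (Hcontr _ _ Hk IH2).
  split; [nra|].
  rewrite <- Hphi, IH2; auto; nra.
Qed.

Lemma iter_bracket k a b :
  (forall i, (i <= k)%nat -> d (Nat.iter i f a) (Nat.iter i f b) <= eps) ->
  Nat.iter k f (br a b) = br (Nat.iter k f a) (Nat.iter k f b).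
Proof.
  destruct (sd_bracket H) as (_ & _ & _ & _ & Hphi & _).
  induction k as [|k IH]; intros Hclose; [reflexivity|].
  simpl; rewrite IH by (intros i Hi; apply Hclose; lia).
  apply Hphi; [apply (Hclose k) | apply (Hclose (S k))]; lia.
Qed.

Lemma bracket_near_diag eta : 0 < eta ->
  exists del, 0 < del /\ del <= eps /\ forall a b, d a b < del -> d a (br a b) < eta.
Proof.
  pose proof (sd_metric H) as Hm; pose proof (sd_lam H) as Hlam.
  pose proof (sd_eps H) as Heps.
  intros Heta; apply NNPP; intros Hnone.
  (* Pairs violating the bound at scale [min eps lam^n] accumulate at a point of the
     diagonal, where the bracket is continuous. *)
  assert (Hbad : forall n, exists ab : T * T,
    d (fst ab) (snd ab) < Rmin eps (lam ^ n) /\ eta <= d (fst ab) (br (fst ab) (snd ab))).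
  { intros n; apply NNPP; intros Hn; apply Hnone.
    exists (Rmin eps (lam ^ n)); repeat split.
    - apply Rmin_glb_lt; [lra | apply pow_lt; lra].
    - apply Rmin_l.
    - intros a b Hab; apply Rnot_le_lt; intros Hle; apply Hn; now exists (a, b). }
  set (ab n := proj1_sig (constructive_indefinite_description _ (Hbad n))).
  assert (Hab : forall n, d (fst (ab n)) (snd (ab n)) < Rmin eps (lam ^ n) /\
                          eta <= d (fst (ab n)) (br (fst (ab n)) (snd (ab n))))
    by (intros n; exact (proj2_sig (constructive_indefinite_description _ (Hbad n)))).
  destruct (compact_cluster_point d Hm (sd_compact H) (fun n => fst (ab n))) as [u Hu].
  destruct (sd_bracket H) as (Hcont & _).
  destruct (Hcont u u (eta / 2)) as [r [Hr Hnear]]; [rewrite (dist_refl d Hm); lra | lra |].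
  rewrite bracket_diag in Hnear.
  destruct (exists_pos_below (r / 2) (eta / 2)) as (r' & Hr' & Hr'_r & Hr'_eta); [lra..|].
  destruct (pow_eventually_lt lam r' Hlam Hr') as [M HM].
  destruct (Hu r' Hr' M) as [k [Hk Huk]]; simpl in Huk.
  destruct (Hab k) as [Hclose Hfar]; specialize (HM k Hk).
  destruct (ab k) as [a b]; simpl in *.
  pose proof (Rmin_l eps (lam ^ k)); pose proof (Rmin_r eps (lam ^ k)).
  pose proof (dist_triangle d Hm u a b).
  assert (Hbr : d u (br a b) < eta / 2) by (apply Hnear; lra).
  pose proof (dist_triangle d Hm a u (br a b)); rewrite (dist_sym d Hm a u) in *; lra.
Qed.

Lemma bracket_eq_left_of_backward_close :
  exists c, 0 < c /\ forall p q,
    (forall j, d (Nat.iter j g p) (Nat.iter j g q) < c) -> br p q = p.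
Proof.
  pose proof (sd_metric H) as Hm; pose proof (sd_lam H) as Hlam.
  destruct (bracket_near_diag (eps / 2)) as [del [Hdel [Hdel_eps Hnear]]];
    [pose proof (sd_eps H); lra|].
  destruct (exists_pos_below del (eps / 2)) as (c & Hc & Hc_del & Hc_eps);
    [lra | pose proof (sd_eps H); lra |].
  exists c; split; [exact Hc|].
  intros p q Hback; symmetry; apply (dist_eq0 d Hm).
  (* [br a b] lies on the local stable set of [a = g^k p], and [f^k] maps the pair
     [(a, br a b)] to [(p, br p q)]. *)
  apply (geometric_bound_eq0 lam _ eps Hlam (dist_ge0 d Hm _ _)); intros k.
  set (a := Nat.iter k g p); set (b := Nat.iter k g q).
  assert (Hab : d a b < c) by apply Hback.
  assert (Hpq : Nat.iter k f (br a b) = br p q).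
  { rewrite iter_bracket; unfold a, b; [now rewrite !(iter_cancel f g (sd_inv_r H))|].
    intros i Hi; rewrite !(iter_sub_cancel f g (sd_inv_r H)) by lia.
    specialize (Hback (k - i)%nat); lra. }
  assert (Hz : d a (br a b) < eps / 2) by (apply Hnear; lra).
  destruct (stable_iter_contract k a (br a b)) as [Hcontr _]; [lra|..].
  { apply bracket_bracket_r; lra. }
  unfold a at 1 in Hcontr; rewrite (iter_cancel f g (sd_inv_r H)), Hpq in Hcontr.
  assert (0 <= lam ^ k) by (apply pow_le; lra); nra.
Qed.

End SmaleData.

Lemma expansive {T d f g eps lam} {br : T -> T -> T} :
  smale_data d f g eps lam br ->
  exists c, 0 < c /\ forall p q,
    (forall j, d (Nat.iter j f p) (Nat.iter j f q) < c) ->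
    (forall j, d (Nat.iter j g p) (Nat.iter j g q) < c) -> p = q.
Proof.
  intros H.
  destruct (bracket_eq_left_of_backward_close H) as [c1 [Hc1 Hback]].
  destruct (bracket_eq_left_of_backward_close (smale_data_inverse _ _ _ _ _ _ H))
    as [c2 [Hc2 Hfwd]].
  destruct (exists_pos_below c1 c2 Hc1 Hc2) as (c & Hc & Hc_1 & Hc_2).
  exists c; split; [exact Hc|].
  intros p q Hf Hg.
  rewrite <- (Hback p q), (Hfwd q p); auto; intros j.
  - specialize (Hf j); rewrite (dist_sym d (sd_metric H)); lra.
  - specialize (Hg j); lra.
Qed.

(* Each step projects the [N]-th image back onto the local stable set of [x]; a
   cluster point of the chain has a backward orbit following the pseudo-orbit
   [x, f x, ..., f^(N-1) x, x, ...]. *)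
Fixpoint stable_chain {T} (br : T -> T -> T) (f : T -> T) (N : nat) (x : T) (k : nat) : T :=
  match k with
  | O => x
  | S k => br x (Nat.iter N f (stable_chain br f N x k))
  end.

Section Shadowing.
Context {T : Type} {d : T -> T -> R} {f g : T -> T} {eps lam : R} {br : T -> T -> T}
  (H : smale_data d f g eps lam br).
Variables (eta del : R) (N : nat) (x : T).
Hypotheses (Hdel : 0 < del <= eta) (Heta_eps : 2 * eta <= eps)
  (Hnear : forall a b, d a b < del -> d a (br a b) < eta)
  (Hpow : lam ^ N <= 1 / 2) (Hpow_eta : lam ^ N * eta < del / 2)
  (Hx : d x (Nat.iter N f x) < del / 2).

Local Notation chain := (stable_chain br f N x).

Lemma image_near_of_stable z : d x z < eta -> br x z = z -> d x (Nat.iter N f z) < del.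
Proof.
  intros Hxz Hz; pose proof (sd_metric H) as Hm.
  destruct (stable_iter_contract H N x z) as [Hcontr _]; [lra | auto |].
  assert (lam ^ N * d x z <= lam ^ N * eta)
    by (apply Rmult_le_compat_l; [apply pow_le; pose proof (sd_lam H)|]; lra).
  pose proof (dist_triangle d Hm x (Nat.iter N f x) (Nat.iter N f z)); lra.
Qed.

Lemma chain_stable k : d x (chain k) < eta /\ br x (chain k) = chain k.
Proof.
  pose proof (sd_metric H) as Hm.
  induction k as [|k [Hnear_k Hstable_k]]; simpl.
  - rewrite (dist_refl d Hm), (bracket_diag H); split; [lra | auto].
  - pose proof (image_near_of_stable _ Hnear_k Hstable_k) as Himage.
    pose proof (Hnear _ _ Himage).
    split; auto; apply (bracket_bracket_r H); lra.
Qed.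

Lemma chain_unstable k :
  br (chain (S k)) (Nat.iter N f (chain k)) = chain (S k) /\
  d (chain (S k)) (Nat.iter N f (chain k)) <= 2 * eta.
Proof.
  pose proof (sd_metric H) as Hm.
  destruct (chain_stable k) as [Hnear_k Hstable_k].
  pose proof (image_near_of_stable _ Hnear_k Hstable_k) as Himage; simpl.
  set (w := Nat.iter N f (chain k)) in *.
  pose proof (Hnear _ _ Himage).
  assert (d (br x w) w <= 2 * eta).
  { pose proof (dist_triangle d Hm (br x w) x w); rewrite (dist_sym d Hm (br x w) x) in *; lra. }
  split; auto; apply (bracket_bracket_l H); lra.
Qed.

Lemma chain_backward_step k j :
  d (Nat.iter j g (chain (S k))) (Nat.iter j g (Nat.iter N f (chain k))) <= 2 * eta * lam ^ j.
Proof.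
  pose proof (sd_metric H) as Hm.
  destruct (chain_unstable k) as [Hunstable Hclose].
  destruct (stable_iter_contract (smale_data_inverse _ _ _ _ _ _ H) j
              (Nat.iter N f (chain k)) (chain (S k))) as [Hcontr _];
    [rewrite (dist_sym d Hm); lra | auto |].
  assert (0 <= lam ^ j) by (apply pow_le; pose proof (sd_lam H); lra).
  rewrite (dist_sym d Hm (chain (S k))) in Hclose; rewrite (dist_sym d Hm); nra.
Qed.

Lemma chain_image_backward k j : (j <= N)%nat ->
  d (Nat.iter j g (Nat.iter N f (chain k))) (Nat.iter (j mod N) g (Nat.iter N f x))
  <= 2 * eta.
Proof.
  pose proof (sd_metric H) as Hm; pose proof (sd_inv_l H) as Hgf.
  destruct (chain_stable k) as [Hnear_k Hstable_k].
  intros Hj; destruct (Nat.eq_dec j N) as [->|HjN].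
  - rewrite Nat.Div0.mod_same, (iter_cancel g f Hgf); simpl.
    pose proof (dist_triangle d Hm (chain k) x (Nat.iter N f x)).
    rewrite (dist_sym d Hm (chain k) x) in *; lra.
  - rewrite Nat.mod_small, !(iter_sub_cancel g f Hgf) by lia.
    destruct (stable_iter_contract H (N - j) x (chain k)) as [Hcontr _]; [lra | auto |].
    assert (0 <= lam ^ (N - j) <= 1) by (apply pow_le_1; pose proof (sd_lam H); lra).
    pose proof (dist_ge0 d Hm x (chain k)).
    rewrite (dist_sym d Hm); nra.
Qed.

(* The slack [4 eta lam^j] absorbs the error [2 eta lam^j] added at each block of [N]
   backward steps, since [lam^N <= 1/2]. *)
Lemma chain_shadow k j : (j <= k * N)%nat ->
  d (Nat.iter j g (chain k)) (Nat.iter (j mod N) g (Nat.iter N f x))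
  <= 8 * eta - 4 * eta * lam ^ j.
Proof.
  pose proof (sd_metric H) as Hm; pose proof (sd_inv_l H) as Hgf.
  assert (Hlam : 0 <= lam ^ j <= 1) by (apply pow_le_1; pose proof (sd_lam H); lra).
  revert j Hlam; induction k as [|k IH]; intros j Hlam Hj.
  - replace j with 0%nat by lia; rewrite Nat.Div0.mod_0_l; simpl; lra.
  - pose proof (chain_backward_step k j) as Hstep.
    pose proof (dist_triangle d Hm (Nat.iter j g (chain (S k)))
                  (Nat.iter j g (Nat.iter N f (chain k)))
                  (Nat.iter (j mod N) g (Nat.iter N f x))) as Htri.
    destruct (Nat.le_gt_cases j N) as [HjN|HjN].
    + pose proof (chain_image_backward k j HjN); nra.
    + set (i := (j - N)%nat) in *.
      assert (Hji : j = (i + N)%nat) by lia.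
      assert (Hlam_i : 0 <= lam ^ i <= 1) by (apply pow_le_1; pose proof (sd_lam H); lra).
      assert (Hpow_j : lam ^ j = lam ^ i * lam ^ N) by (now rewrite Hji, pow_add).
      assert (Hmod : (j mod N = i mod N)%nat)
        by (rewrite Hji, <- (Nat.mul_1_l N) at 1; apply Nat.Div0.mod_add).
      assert (Hback : Nat.iter j g (Nat.iter N f (chain k)) = Nat.iter i g (chain k))
        by (now rewrite Hji, Nat.iter_add, (iter_cancel g f Hgf)).
      rewrite Hback, Hmod in Htri; rewrite Hback, Hpow_j in Hstep; rewrite Hmod, Hpow_j.
      pose proof (IH i Hlam_i ltac:(simpl in Hj; lia)).
      assert (lam ^ i * lam ^ N <= lam ^ i * (1 / 2)) by (apply Rmult_le_compat_l; lra).
      nra.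
Qed.

Lemma backward_shadowing : exists u, d x u <= eta /\
  forall j, d (Nat.iter j g u) (Nat.iter (j mod N) g (Nat.iter N f x)) <= 8 * eta.
Proof.
  pose proof (sd_metric H) as Hm.
  assert (HN : N <> 0%nat) by (intros ->; simpl in Hpow; lra).
  destruct (compact_cluster_point d Hm (sd_compact H) chain) as [u Hu].
  exists u; split.
  - apply Rle_plus_epsilon; intros r Hr.
    destruct (Hu r Hr 0%nat) as [k [_ Hk]].
    destruct (chain_stable k) as [Hnear_k _].
    pose proof (dist_triangle d Hm x (chain k) u); rewrite (dist_sym d Hm (chain k) u) in *; lra.
  - intros j; apply Rle_plus_epsilon; intros r Hr.
    destruct (continuous_iter d g (sd_cont_inv H) j u r Hr) as [s [Hs Hcont]].
    destruct (Hu s Hs j) as [k [Hk Huk]].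
    assert (Hshadow := chain_shadow k j ltac:(nia)).
    assert (0 <= eta * lam ^ j) by (apply Rmult_le_pos; [lra | apply pow_le; pose proof (sd_lam H); lra]).
    pose proof (Hcont _ Huk).
    pose proof (dist_triangle d Hm (Nat.iter j g u) (Nat.iter j g (chain k))
                  (Nat.iter (j mod N) g (Nat.iter N f x))); lra.
Qed.

End Shadowing.

Lemma bracket_shadows_both_ways {T d f g eps lam} {br : T -> T -> T}
  (H : smale_data d f g eps lam br) (e b : R) (s u : T) (F B : nat -> T) :
  e <= eps / 4 -> d s u < e -> d s (br s u) < e ->
  (forall j, d (Nat.iter j f s) (F j) <= b) ->
  (forall j, d (Nat.iter j g u) (B j) <= b) ->
  (forall j, d (Nat.iter j f (br s u)) (F j) <= b + e) /\
  (forall j, d (Nat.iter j g (br s u)) (B j) <= b + 2 * e).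
Proof.
  pose proof (sd_metric H) as Hm; pose proof (sd_lam H) as Hlam.
  intros He Hsu Hsp HF HB.
  assert (Hpu : d u (br s u) < 2 * e)
    by (pose proof (dist_triangle d Hm u s (br s u)); rewrite (dist_sym d Hm u s) in *; lra).
  pose proof (dist_ge0 d Hm s (br s u)); pose proof (dist_ge0 d Hm u (br s u)).
  split; intros j; assert (0 <= lam ^ j <= 1) by (apply pow_le_1; lra).
  - destruct (stable_iter_contract H j s (br s u)) as [Hcontr _]; [lra|..].
    { apply (bracket_bracket_r H); lra. }
    pose proof (dist_triangle d Hm (Nat.iter j f (br s u)) (Nat.iter j f s) (F j)) as Htri.
    rewrite (dist_sym d Hm _ (Nat.iter j f s)) in Htri; specialize (HF j); nra.
  - destruct (stable_iter_contract (smale_data_inverse _ _ _ _ _ _ H) j u (br s u))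
      as [Hcontr _]; [lra|..].
    { apply (bracket_bracket_l H); rewrite ?(dist_sym d Hm (br s u) u); lra. }
    pose proof (dist_triangle d Hm (Nat.iter j g (br s u)) (Nat.iter j g u) (B j)) as Htri.
    rewrite (dist_sym d Hm _ (Nat.iter j g u)) in Htri; specialize (HB j); nra.
Qed.

Lemma periodic_of_shadowing {T} (d : T -> T -> R) (f g : T -> T) (c b : R) (N : nat)
  (x p : T) : is_metric d -> (forall x, g (f x) = x) ->
  (forall p q, (forall j, d (Nat.iter j f p) (Nat.iter j f q) < c) ->
               (forall j, d (Nat.iter j g p) (Nat.iter j g q) < c) -> p = q) ->
  2 * b < c ->
  (forall j, d (Nat.iter j f p) (Nat.iter (j mod N) f x) <= b) ->
  (forall j, d (Nat.iter j g p) (Nat.iter (j mod N) g (Nat.iter N f x)) <= b) ->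
  Nat.iter N f p = p.
Proof.
  intros Hm Hgf Hexp Hbc HF HB.
  destruct (Nat.eq_dec N 0) as [->|HN]; [reflexivity|].
  assert (Hclose : forall y z w, d y z <= b -> d w z <= b -> d y w < c).
  { intros y z w Hyz Hwz; pose proof (dist_triangle d Hm y z w).
    rewrite (dist_sym d Hm z w) in *; lra. }
  assert (Hmod : forall i, ((i + N) mod N = i mod N)%nat)
    by (intros i; rewrite <- (Nat.mul_1_l N) at 1; apply Nat.Div0.mod_add).
  assert (Hfwd : forall j, d (Nat.iter j f p) (Nat.iter j f (Nat.iter N f p)) < c).
  { intros j; rewrite <- Nat.iter_add; apply (Hclose _ (Nat.iter (j mod N) f x)); auto.
    rewrite <- (Hmod j); apply HF. }
  symmetry; apply Hexp; intros j; [apply Hfwd|].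
  destruct (Nat.eq_dec j 0) as [->|Hj0]; [exact (Hfwd 0%nat)|].
  destruct (Nat.lt_ge_cases j N) as [HjN|HjN].
  - rewrite (iter_sub_cancel g f Hgf) by lia.
    apply (Hclose _ (Nat.iter (N - j) f x)).
    + specialize (HB j); rewrite Nat.mod_small, (iter_sub_cancel g f Hgf) in HB by lia.
      exact HB.
    + specialize (HF (N - j)%nat); rewrite Nat.mod_small in HF by lia; exact HF.
  - replace j with (j - N + N)%nat by lia.
    rewrite (Nat.iter_add (j - N) N _ g (Nat.iter N f p)), (iter_cancel g f Hgf).
    apply (Hclose _ (Nat.iter ((j - N) mod N) g (Nat.iter N f x))); auto.
    rewrite <- Hmod; apply HB.
Qed.

Lemma closing_at_scale {T d f g eps lam} {br : T -> T -> T}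
  (H : smale_data d f g eps lam br) (c e1 e2 del : R) (N : nat) (x : T) :
  (forall p q, (forall j, d (Nat.iter j f p) (Nat.iter j f q) < c) ->
               (forall j, d (Nat.iter j g p) (Nat.iter j g q) < c) -> p = q) ->
  4 * e1 + 16 * e2 < c -> e1 <= eps / 4 -> 3 * e2 <= e1 ->
  (forall a b, d a b < 3 * e2 -> d a (br a b) < e1) ->
  0 < del <= e2 ->
  (forall a b, d a b < del -> d a (br a b) < e2 /\ d a (br b a) < e2) ->
  lam ^ N <= 1 / 2 -> lam ^ N * e2 < del / 2 -> d x (Nat.iter N f x) < del / 2 ->
  exists p, Nat.iter N f p = p.
Proof.
  intros Hexp Hc He1 He2 Hnear1 Hdel Hnear2 Hpow Hpow_e2 Hx.
  pose proof (sd_metric H) as Hm.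
  destruct (backward_shadowing H e2 del N x) as (u & Hxu & Hu);
    [lra | lra | intros a b Hab; apply (Hnear2 a b Hab) | lra | lra | lra |].
  pose proof (iter_cancel g f (sd_inv_l H) N x) as Hgf_N.
  destruct (backward_shadowing (smale_data_inverse _ _ _ _ _ _ H) e2 del N (Nat.iter N f x))
    as (s & Hys & Hs);
    [lra | lra | intros a b Hab; apply (Hnear2 a b Hab) | lra | lra |
     rewrite Hgf_N, (dist_sym d Hm); lra |].
  rewrite Hgf_N in Hs.
  assert (Hsu : d s u < 3 * e2).
  { pose proof (dist_triangle d Hm s (Nat.iter N f x) u) as Htri1.
    pose proof (dist_triangle d Hm (Nat.iter N f x) x u) as Htri2.
    rewrite (dist_sym d Hm s (Nat.iter N f x)) in Htri1.
    rewrite (dist_sym d Hm _ x) in Htri2; lra. }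
  destruct (bracket_shadows_both_ways H e1 (8 * e2) s u
              (fun j => Nat.iter (j mod N) f x) (fun j => Nat.iter (j mod N) g (Nat.iter N f x)))
    as [Hfwd Hbwd]; auto; [lra|].
  exists (br s u).
  apply (periodic_of_shadowing d f g c (8 * e2 + 2 * e1) N x _ Hm (sd_inv_l H) Hexp);
    [lra | intros j; specialize (Hfwd j); simpl in Hfwd; lra | exact Hbwd].
Qed.

Lemma closing_lemma {T d f g eps lam} {br : T -> T -> T} :
  smale_data d f g eps lam br ->
  exists del M, 0 < del /\ forall N x, (M <= N)%nat -> d x (Nat.iter N f x) < del ->
    exists p, Nat.iter N f p = p.
Proof.
  intros H; pose proof (sd_eps H) as Heps.
  destruct (expansive H) as [c [Hc Hexp]].
  destruct (exists_pos_below (eps / 4) (c / 10)) as (e1 & He1 & He1_eps & He1_c); [lra..|].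
  destruct (bracket_near_diag H e1 He1) as (d1 & Hd1 & _ & Hnear1).
  destruct (exists_pos_below (d1 / 3) (e1 / 3)) as (e2 & He2 & He2_d1 & He2_e1); [lra..|].
  destruct (bracket_near_diag H e2 He2) as (da & Hda & _ & Hnear_a).
  destruct (bracket_near_diag (smale_data_inverse _ _ _ _ _ _ H) e2 He2)
    as (db & Hdb & _ & Hnear_b).
  destruct (exists_pos_below da db Hda Hdb) as (dab & Hdab & Hdab_a & Hdab_b).
  destruct (exists_pos_below dab e2 Hdab He2) as (del & Hdel & Hdel_ab & Hdel_e2).
  assert (Hratio : del / (4 * e2) * e2 = del / 4) by (field; lra).
  destruct (exists_pos_below (1 / 2) (del / (4 * e2))) as (r & Hr & Hr_half & Hr_del);
    [lra | apply Rdiv_lt_0_compat; lra |].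
  destruct (pow_eventually_lt lam r (sd_lam H) Hr) as [M HM].
  exists (del / 2), M; split; [lra|]; intros N x HN Hx.
  specialize (HM N HN).
  assert (0 <= lam ^ N) by (apply pow_le; pose proof (sd_lam H); lra).
  apply (closing_at_scale H c e1 e2 del N x); auto; try lra.
  - intros a b Hab; apply Hnear1; lra.
  - intros a b Hab; split; [apply Hnear_a | apply Hnear_b]; lra.
  - nra.
Qed.

Lemma mixing_recurrence {T} (d : T -> T -> R) (f : T -> T) (x0 : T) :
  is_metric d -> is_mixing d f ->
  forall r M, 0 < r -> exists N x, (M <= N)%nat /\ d x (Nat.iter N f x) < r.
Proof.
  intros Hm Hmix r M Hr.
  assert (Hball : exists y, d x0 y < r / 2) by (exists x0; rewrite (dist_refl d Hm); lra).
  destruct (Hmix _ _ (ball_open d Hm x0 (r / 2)) (ball_open d Hm x0 (r / 2)) Hball Hball)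
    as [K HK].
  destruct (HK (Nat.max K M)) as [x [Hx HNx]]; [lia|].
  exists (Nat.max K M), x; split; [lia|].
  pose proof (dist_triangle d Hm x x0 (Nat.iter (Nat.max K M) f x)).
  rewrite (dist_sym d Hm x x0) in *; lra.
Qed.

Lemma exists_periodic_point {T d f g eps lam} {br : T -> T -> T} (x0 : T) :
  smale_data d f g eps lam br -> is_mixing d f ->
  exists p N, (1 <= N)%nat /\ Nat.iter N f p = p.
Proof.
  intros H Hmix.
  destruct (closing_lemma H) as (del & M & Hdel & Hclosing).
  destruct (mixing_recurrence d f x0 (sd_metric H) Hmix del (Nat.max M 1) Hdel)
    as (N & x & HN & Hx).
  destruct (Hclosing N x ltac:(lia) Hx) as [p Hp].
  exists p, N; split; [lia | exact Hp].
Qed.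

Lemma periodic_points_separated {T d f g eps lam} {br : T -> T -> T} :
  smale_data d f g eps lam br ->
  exists c, 0 < c /\ forall N p q, (1 <= N)%nat ->
    Nat.iter N f p = p -> Nat.iter N f q = q ->
    (forall i, (i <= N)%nat -> d (Nat.iter i f p) (Nat.iter i f q) < c) -> p = q.
Proof.
  intros H; destruct (expansive H) as [c [Hc Hexp]].
  exists c; split; auto; intros N p q HN Hp Hq Hclose.
  assert (Hback : forall z i, Nat.iter N f z = z -> (i <= N)%nat ->
                    Nat.iter i g z = Nat.iter (N - i) f z).
  { intros z i Hz Hi; rewrite <- Hz at 1; apply (iter_sub_cancel g f (sd_inv_l H)); lia. }
  assert (Hperiod : forall z, Nat.iter N f z = z -> Nat.iter N g z = z)
    by (intros z Hz; rewrite Hback, Nat.sub_diag; auto).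
  pose proof (fun j => Nat.mod_upper_bound j N ltac:(lia)) as Hmod.
  apply Hexp; intros j.
  - rewrite (iter_mod f N p Hp j), (iter_mod f N q Hq j); apply Hclose.
    specialize (Hmod j); lia.
  - rewrite (iter_mod g N p (Hperiod p Hp) j), (iter_mod g N q (Hperiod q Hq) j).
    specialize (Hmod j); rewrite !Hback by (auto; lia); apply Hclose; lia.
Qed.

Lemma periodic_points_finite {T d f g eps lam} {br : T -> T -> T} (N : nat) :
  smale_data d f g eps lam br -> (1 <= N)%nat ->
  exists P : list T, forall q, In q P <-> Nat.iter N f q = q.
Proof.
  intros H HN; pose proof (sd_metric H) as Hm.
  destruct (periodic_points_separated H) as [c [Hc Hsep]].
  apply (compact_locally_unique_finite d _
           (fun x y => forall i, (i <= N)%nat -> d (Nat.iter i f x) (Nat.iter i f y) < c / 2)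
           (sd_compact H)).
  - intros x; apply (bowen_ball_open d Hm), (sd_cont H).
  - intros x i _; rewrite (dist_refl d Hm); lra.
  - intros x p q Hxp Hxq Hp Hq; apply (Hsep N p q HN Hp Hq); intros i Hi.
    specialize (Hxp i Hi); specialize (Hxq i Hi).
    pose proof (dist_triangle d Hm (Nat.iter i f p) (Nat.iter i f x) (Nat.iter i f q)).
    rewrite (dist_sym d Hm _ (Nat.iter i f x)) in *; lra.
Qed.

Lemma inhabited_of_infinite {T} : @infinite_type T -> inhabited T.
Proof.
  intros Hinf; apply NNPP; intros Hempty; apply Hinf.
  exists nil; intros x; apply Hempty; exact (inhabits x).
Qed.

Theorem lemma3p5 (X : Type) (d : X -> X -> R) (phi : X -> X)
  (G : Type) (mul : G -> G -> G) (e : G) (inv : G -> G) (act : G -> X -> X) :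
  is_smale_space d phi -> is_mixing d phi ->
  is_group mul e inv -> is_action d phi mul e act -> is_effective e act ->
  exists P : list X,
    P <> nil /\
    (forall p, In p P -> is_periodic phi p) /\
    (forall p, In p P -> In (phi p) P) /\
    (forall q, In q P -> exists p, In p P /\ phi p = q) /\
    (forall g p, In p P -> In (act g p) P).
Proof.
  intros Hss Hmix _ (_ & _ & _ & Hcomm) _.
  destruct (smale_data_of_space d phi Hss) as (phii & eps & lam & br & H).
  destruct (inhabited_of_infinite (proj1 (proj2 (proj2 Hss)))) as [x0].
  destruct (exists_periodic_point x0 H Hmix) as (p0 & N & HN & Hp0).
  destruct (periodic_points_finite N H HN) as [P HP].
  exists P; repeat split.
  - intros ->; now apply (HP p0).
  - intros p Hp; exists N; split; [exact HN | now apply HP].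
  - intros p Hp; apply HP; rewrite Nat.iter_swap; f_equal; now apply HP.
  - intros q Hq; exists (phii q); split; [apply HP | apply (sd_inv_r H)].
    rewrite <- (sd_inv_l H (Nat.iter N phi (phii q))), <- Nat.iter_swap, (sd_inv_r H).
    f_equal; now apply HP.
  - intros h p Hp; apply HP.
    rewrite <- (Nat.iter_swap_gen _ _ (act h) phi phi (Hcomm h)); f_equal; now apply HP.
Qed.
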